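(* Let $k>0$ and let $U:(0,1)\to(0,\infty)$ be any function with $U(c)\ge\sigma(c)$ for all $c\in(0,1)$. Then for all $c\in(0,1)$, $$\frac{2k}{U(1-c)}\le L_2(c)\le\sigma(c).$$ In particular, with $U=U_1$, where $U_1(c)=-2\Phi^{-1}\!\left(\frac{1-c}{1+e^k}\right)$, this gives $-k\big/\Phi^{-1}\!\left(\frac{c}{1+e^k}\right)\le L_2(c)$.
   Context: Let $\Phi$ denote the standard normal distribution function. For $\sigma>0$ put $d_1(\sigma)=-k/\sigma+\sigma/2$, $d_2(\sigma)=-k/\sigma-\sigma/2$, and $C_{\mathrm{BS}}(\sigma)=\Phi(d_1(\sigma))-e^k\,\Phi(d_2(\sigma))$, a strictly increasing bijection from $(0,\infty)$ onto $(0,1)$; for $c\in(0,1)$ the implied volatility $\sigma(c)$ is the unique $\sigma>0$ with $C_{\mathrm{BS}}(\sigma)=c$. The function $d_1^{-1}(x)=x+\sqrt{x^2+2k}$ is the inverse of $d_1$, and $L_2(c)=d_1^{-1}(\Phi^{-1}(c))$. The function $U_1$ is known to satisfy $U_1(c)\ge\sigma(c)$. *)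

From Stdlib Require Import Reals Lra ClassicalEpsilon.
From Coquelicot Require Import Coquelicot.
Open Scope R_scope.

Definition Phi (x : R) : R :=
  / sqrt (2 * PI) *
  RInt_gen (fun t => exp (- (t * t) / 2)) (Rbar_locally m_infty) (at_point x).

Definition Phi_inv (c : R) : R :=
  epsilon (inhabits 0) (fun x => Phi x = c).

Definition d1 (k s : R) : R := - k / s + s / 2.
Definition d2 (k s : R) : R := - k / s - s / 2.

Definition C_BS (k s : R) : R := Phi (d1 k s) - exp k * Phi (d2 k s).

Definition implied_vol (k c : R) : R :=
  epsilon (inhabits 0) (fun s => 0 < s /\ C_BS k s = c).

Definition d1_inv (k x : R) : R := x + sqrt (x * x + 2 * k).

Definition L2 (k c : R) : R := d1_inv k (Phi_inv c).

Definition U1 (k c : R) : R := - 2 * Phi_inv ((1 - c) / (1 + exp k)).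

From Pilot Require Import Defs.
From Stdlib Require Import Reals Lra Psatz FunctionalExtensionality ClassicalEpsilon.
From Coquelicot Require Import Coquelicot.
Open Scope R_scope.

(** The analytic core is that [Phi] is a continuous increasing bijection
    [R -> (0,1)] with [Phi (-x) = 1 - Phi x].  Since [Phi] is defined as an
    improper integral, this needs the Gaussian integral: we write
    [Phi x = 1/2 + G x / sqrt (2 PI)] with [G x = int_0^x exp (-t^2/2) dt], and
    compute [lim G = sqrt (PI/2)] by Feynman's trick ([G^2 + 2 F] is constant,
    where [F x = int_0^1 exp (-x^2 (1+t^2)/2) / (1+t^2) dt] and [F <= gauss]).

    On the Black-Scholes side, [d1_inv] inverts the increasing map [d1], the
    price [C_BS] is continuous with limits 0 and 1 in the volatility, so the
    implied volatility [sigma c] exists.  Then: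
    - [C_BS sigma < Phi (d1 sigma)] gives [L2 c < sigma c];
    - quantile symmetry gives the reflection identity [L2 c * L2 (1-c) = 2k];
    hence for any positive upper bound [U >= sigma],
    [2k / U (1-c) <= 2k / sigma (1-c) < 2k / L2 (1-c) = L2 c].
    The case [U = U1] is then a direct rewriting. *)

Definition gauss (t : R) : R := exp (- (t * t) / 2).
Definition gauss_prim (x : R) : R := RInt gauss 0 x.

Lemma gauss_pos x : 0 < gauss x.
Proof. apply exp_pos. Qed.

Lemma gauss_even x : gauss (- x) = gauss x.
Proof. unfold gauss. now replace (- x * - x) with (x * x) by ring. Qed.

Lemma gauss_continuous x : continuous gauss x.
Proof.
  apply (ex_derive_continuous (K := R_AbsRing) (V := R_NormedModule)).
  unfold gauss. auto_derive. trivial.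
Qed.

Lemma gauss_ex_RInt a b : ex_RInt gauss a b.
Proof.
  apply (ex_RInt_continuous (V := R_CompleteNormedModule)).
  intros; apply gauss_continuous.
Qed.

Lemma gauss_prim_derive x : is_derive gauss_prim x (gauss x).
Proof.
  apply is_derive_RInt with 0.
  - apply filter_forall. intro b.
    apply (RInt_correct (V := R_CompleteNormedModule)), gauss_ex_RInt.
  - apply gauss_continuous.
Qed.

Lemma gauss_prim_continuous x : continuous gauss_prim x.
Proof.
  apply (ex_derive_continuous (K := R_AbsRing) (V := R_NormedModule)).
  eexists. apply gauss_prim_derive.
Qed.

Lemma gauss_prim_0 : gauss_prim 0 = 0.
Proof. apply (RInt_point (V := R_CompleteNormedModule)). Qed.

Lemma gauss_prim_nonneg x : 0 <= x -> 0 <= gauss_prim x.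
Proof.
  intro Hx. apply RInt_ge_0; [exact Hx | apply gauss_ex_RInt |].
  intros; left; apply gauss_pos.
Qed.

Lemma gauss_prim_increasing a b : a < b -> gauss_prim a < gauss_prim b.
Proof.
  intro Hab.
  assert (Hdiff : gauss_prim b - gauss_prim a = RInt gauss a b).
  { unfold gauss_prim. rewrite <- (RInt_Chasles gauss 0 a b) by apply gauss_ex_RInt.
    unfold plus; simpl; ring. }
  assert (0 < RInt gauss a b); [| lra].
  apply RInt_gt_0; [exact Hab | intros; apply gauss_pos | intros; apply gauss_continuous].
Qed.

(** [gauss_prim] is odd, by the substitution [t = -u] and evenness of [gauss]. *)
Lemma gauss_prim_odd x : gauss_prim (- x) = - gauss_prim x.
Proof.
  unfold gauss_prim.
  assert (Hsub := RInt_comp_lin (V := R_CompleteNormedModule) gauss (-1) 0 0 x).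
  replace (-1 * 0 + 0) with 0 in Hsub by ring.
  replace (-1 * x + 0) with (- x) in Hsub by ring.
  rewrite <- Hsub by apply gauss_ex_RInt.
  rewrite (RInt_ext (V := R_CompleteNormedModule) _ (fun y => opp (gauss y))).
  2:{ intros y _. unfold scal; simpl; unfold mult, opp; simpl.
      replace (-1 * y + 0) with (- y) by ring. rewrite gauss_even. ring. }
  rewrite (RInt_opp (V := R_CompleteNormedModule)) by apply gauss_ex_RInt.
  reflexivity.
Qed.

Definition feynman_integrand (x t : R) : R :=
  exp (- (x * x) * (1 + t * t) / 2) / (1 + t * t).
Definition feynman (x : R) : R := RInt (feynman_integrand x) 0 1.

Lemma one_plus_sqr_pos t : 0 < 1 + t * t.
Proof. nra. Qed.

Lemma feynman_integrand_derive x t :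
  is_derive (fun u => feynman_integrand u t) x (- x * exp (- (x * x) * (1 + t * t) / 2)).
Proof.
  pose proof (one_plus_sqr_pos t).
  unfold feynman_integrand. auto_derive; [trivial |]. unfold Rdiv. field. lra.
Qed.

Lemma feynman_integrand_ex_RInt x a b : ex_RInt (feynman_integrand x) a b.
Proof.
  apply (ex_RInt_continuous (V := R_CompleteNormedModule)). intros t _.
  apply (ex_derive_continuous (K := R_AbsRing) (V := R_NormedModule)).
  pose proof (one_plus_sqr_pos t).
  unfold feynman_integrand. auto_derive. lra.
Qed.

(** Joint continuity of the [x]-derivative of the integrand, needed to
    differentiate under the integral sign. *)
Lemma feynman_integrand_derive_continuous x t :
  continuity_2d_pt (fun u v => Derive (fun w => feynman_integrand w v) u) x t.
Proof.
  apply continuity_2d_pt_ext with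
    (f := fun u v => - u * exp (- (u * u) * (1 + v * v) / 2)).
  { intros u v. symmetry. apply is_derive_unique, feynman_integrand_derive. }
  apply continuity_2d_pt_mult.
  - apply continuity_2d_pt_opp, continuity_2d_pt_id1.
  - apply continuity_1d_2d_pt_comp.
    + apply derivable_continuous_pt, derivable_pt_exp.
    + unfold Rdiv. apply continuity_2d_pt_mult; [| apply continuity_2d_pt_const].
      apply continuity_2d_pt_mult.
      * apply continuity_2d_pt_opp.
        apply continuity_2d_pt_mult; apply continuity_2d_pt_id1.
      * apply continuity_2d_pt_plus; [apply continuity_2d_pt_const |].
        apply continuity_2d_pt_mult; apply continuity_2d_pt_id2.
Qed.

(** [int_0^1 x gauss (x t) dt = gauss_prim x], by the substitution [u = x t]. *)
Lemma gauss_prim_rescaled x :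
  RInt (fun t => x * gauss (x * t)) 0 1 = gauss_prim x.
Proof.
  assert (Hsub := RInt_comp_lin (V := R_CompleteNormedModule) gauss x 0 0 1).
  replace (x * 0 + 0) with 0 in Hsub by ring.
  replace (x * 1 + 0) with x in Hsub by ring.
  unfold gauss_prim. rewrite <- Hsub by apply gauss_ex_RInt.
  apply RInt_ext. intros t _. unfold scal; simpl; unfold mult; simpl.
  now rewrite Rplus_0_r.
Qed.

Lemma feynman_derive x : is_derive feynman x (- gauss x * gauss_prim x).
Proof.
  assert (Hparam : is_derive feynman x
            (RInt (fun t => Derive (fun u => feynman_integrand u t) x) 0 1)).
  { apply (is_derive_RInt_param feynman_integrand 0 1 x).
    - apply filter_forall. intros y t _. eexists. apply feynman_integrand_derive.
    - intros t _. apply feynman_integrand_derive_continuous.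
    - apply filter_forall. intro y. apply feynman_integrand_ex_RInt. }
  replace (- gauss x * gauss_prim x)
    with (RInt (fun t => Derive (fun u => feynman_integrand u t) x) 0 1); [exact Hparam |].
  rewrite (RInt_ext (V := R_CompleteNormedModule) _
             (fun t => scal (- gauss x) (x * gauss (x * t)))).
  2:{ intros t _. cbv beta.
      transitivity (- x * exp (- (x * x) * (1 + t * t) / 2)).
      { apply is_derive_unique, feynman_integrand_derive. }
      unfold scal; simpl; unfold mult; simpl. unfold gauss.
      replace (- (x * x) * (1 + t * t) / 2)
        with (- (x * x) / 2 + - (x * t * (x * t)) / 2) by field.
      rewrite exp_plus. ring. }
  rewrite (RInt_scal (V := R_CompleteNormedModule)), gauss_prim_rescaled; [reflexivity |].
  apply (ex_RInt_continuous (V := R_CompleteNormedModule)). intros t _.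
  apply (ex_derive_continuous (K := R_AbsRing) (V := R_NormedModule)).
  unfold gauss. auto_derive. trivial.
Qed.

(** [feynman 0 = int_0^1 dt / (1+t^2) = atan 1 = PI/4]. *)
Lemma feynman_0 : feynman 0 = PI / 4.
Proof.
  unfold feynman.
  rewrite (RInt_ext (V := R_CompleteNormedModule) _ (fun t => / (1 + t * t))).
  2:{ intros t _. unfold feynman_integrand.
      replace (- (0 * 0) * (1 + t * t) / 2) with 0 by field.
      rewrite exp_0. unfold Rdiv. apply Rmult_1_l. }
  rewrite <- atan_1.
  replace (atan 1) with (atan 1 - atan 0) by (rewrite atan_0; ring).
  apply is_RInt_unique, (is_RInt_derive (V := R_CompleteNormedModule) atan).
  - intros t _. apply is_derive_Reals.
    replace (1 + t * t) with (1 + t ^ 2) by ring. apply derivable_pt_lim_atan.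
  - intros t _. apply (ex_derive_continuous (K := R_AbsRing) (V := R_NormedModule)).
    pose proof (one_plus_sqr_pos t). auto_derive. lra.
Qed.

(** The key identity: [gauss_prim x ^2 + 2 feynman x] has derivative 0,
    hence equals its value [PI/2] at 0. *)
Lemma gauss_prim_feynman x : gauss_prim x * gauss_prim x + 2 * feynman x = PI / 2.
Proof.
  set (h y := gauss_prim y * gauss_prim y + 2 * feynman y).
  assert (Hh' : forall y, is_derive h y 0).
  { intro y.
    assert (Hsq := is_derive_mult gauss_prim gauss_prim y _ _
                     (gauss_prim_derive y) (gauss_prim_derive y) (fun _ _ => Rmult_comm _ _)).
    assert (Hsum := is_derive_plus _ _ y _ _ Hsq
                      (is_derive_scal feynman y 2 _ (feynman_derive y))).
    simpl in Hsum. unfold plus, mult in Hsum; simpl in Hsum.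
    replace 0 with (gauss y * gauss_prim y + gauss_prim y * gauss y
                    + 2 * (- gauss y * gauss_prim y)) by ring.
    exact Hsum. }
  assert (Hconst : h x - h 0 = 0).
  { assert (HI := is_RInt_derive (V := R_CompleteNormedModule) h (fun _ => 0) 0 x
                     (fun y _ => Hh' y) (fun y _ => continuous_const _ y)).
    apply is_RInt_unique in HI. rewrite (RInt_const (V := R_CompleteNormedModule)) in HI.
    unfold scal, minus, plus, opp in HI; simpl in HI; unfold mult in HI; simpl in HI.
    lra. }
  assert (h 0 = PI / 2) by (unfold h; rewrite gauss_prim_0, feynman_0; field).
  fold (h x). lra.
Qed.

(** [0 <= feynman x <= gauss x]: the integrand is positive and bounded by
    [exp (-x^2/2)] on [0,1]. *)
Lemma feynman_bounds x : 0 <= feynman x <= gauss x.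
Proof.
  unfold feynman. split.
  - apply RInt_ge_0; [lra | apply feynman_integrand_ex_RInt |].
    intros t _. unfold feynman_integrand. left.
    apply Rdiv_lt_0_compat; [apply exp_pos | apply one_plus_sqr_pos].
  - replace (gauss x) with (RInt (fun _ => gauss x) 0 1).
    2:{ rewrite (RInt_const (V := R_CompleteNormedModule)).
        unfold scal; simpl; unfold mult; simpl. ring. }
    apply RInt_le; [lra | apply feynman_integrand_ex_RInt
                   | apply (ex_RInt_const (V := R_CompleteNormedModule)) |].
    intros t _. unfold feynman_integrand, gauss.
    set (A := exp (- (x * x) * (1 + t * t) / 2)).
    assert (HA : 0 < A) by apply exp_pos.
    assert (Ht : 0 < 1 + t * t) by apply one_plus_sqr_pos.
    apply Rle_trans with A.
    + apply Rmult_le_reg_r with (1 + t * t); [lra |].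
      unfold Rdiv. rewrite Rmult_assoc, Rinv_l, Rmult_1_r by lra. nra.
    + assert (Hle : - (x * x) * (1 + t * t) / 2 <= - (x * x) / 2).
      { assert (0 <= x * x * (t * t)) by (apply Rmult_le_pos; nra). lra. }
      destruct (Rle_lt_or_eq_dec _ _ Hle) as [Hlt | Heq].
      * left. now apply exp_increasing.
      * right. unfold A. now rewrite Heq.
Qed.

(** Half of the total Gaussian mass, [int_0^oo gauss = sqrt (2 PI) / 2]. *)
Definition half_mass : R := sqrt (2 * PI) / 2.

Lemma half_mass_pos : 0 < half_mass.
Proof.
  unfold half_mass. apply Rdiv_lt_0_compat; [| lra].
  apply sqrt_lt_R0. pose proof PI_RGT_0. lra.
Qed.

Lemma half_mass_sqr : half_mass * half_mass = PI / 2.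
Proof.
  unfold half_mass.
  replace (sqrt (2 * PI) / 2 * (sqrt (2 * PI) / 2)) with (sqrt (2 * PI) * sqrt (2 * PI) / 4)
    by field.
  rewrite sqrt_sqrt; [field | pose proof PI_RGT_0; lra].
Qed.

Lemma gauss_prim_sqr x : gauss_prim x * gauss_prim x = half_mass * half_mass - 2 * feynman x.
Proof. rewrite half_mass_sqr. pose proof (gauss_prim_feynman x). lra. Qed.

Lemma gauss_prim_lt_half_mass x : gauss_prim x < half_mass.
Proof.
  assert (Hle : forall y, 0 <= y -> gauss_prim y <= half_mass).
  { intros y Hy.
    pose proof (gauss_prim_nonneg y Hy). pose proof (gauss_prim_sqr y).
    pose proof (feynman_bounds y). pose proof half_mass_pos. nra. }
  apply Rlt_le_trans with (gauss_prim (Rabs x + 1)).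
  - apply gauss_prim_increasing. pose proof (Rle_abs x). lra.
  - apply Hle. pose proof (Rabs_pos x). lra.
Qed.

Lemma gauss_prim_gt_neg_half_mass x : - half_mass < gauss_prim x.
Proof. pose proof (gauss_prim_lt_half_mass (- x)). rewrite gauss_prim_odd in H. lra. Qed.

(** A crude tail bound: [gauss x = exp (-x^2/2) <= exp (-x) < 1/(1+x)] for [x >= 2]. *)
Lemma gauss_tail_bound x : 2 <= x -> gauss x < / (1 + x).
Proof.
  intro Hx. unfold gauss.
  apply Rle_lt_trans with (exp (- x)).
  - destruct (Req_dec x 2) as [-> | Hne].
    + right. f_equal. field.
    + left. apply exp_increasing. nra.
  - rewrite exp_Ropp. apply Rinv_lt_contravar.
    + apply Rmult_lt_0_compat; [lra | apply exp_pos].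
    + apply exp_ineq1. lra.
Qed.

(** [gauss_prim x -> half_mass] as [x -> +oo], in explicit [eps]-[M] form:
    [(half_mass - gauss_prim x) * half_mass <= half_mass^2 - gauss_prim x^2
       = 2 feynman x <= 2 gauss x < 2 / (1+x)]. *)
Lemma gauss_prim_near_half_mass eps :
  0 < eps -> exists M, forall x, M <= x -> half_mass - eps < gauss_prim x.
Proof.
  intro He. pose proof half_mass_pos as Hm.
  assert (Hme : 0 < half_mass * eps) by (apply Rmult_lt_0_compat; lra).
  exists (Rmax 2 (2 / (half_mass * eps))). intros x Hx.
  assert (H2 : 2 <= x) by (pose proof (Rmax_l 2 (2 / (half_mass * eps))); lra).
  assert (Hbig : 2 <= x * (half_mass * eps)).
  { pose proof (Rmax_r 2 (2 / (half_mass * eps))).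
    apply Rmult_le_reg_r with (/ (half_mass * eps)); [apply Rinv_0_lt_compat; lra |].
    rewrite Rmult_assoc, Rinv_r, Rmult_1_r by lra. fold (Rdiv 2 (half_mass * eps)). lra. }
  assert (Htail : gauss x * (1 + x) < 1).
  { apply Rmult_lt_reg_r with (/ (1 + x)); [apply Rinv_0_lt_compat; lra |].
    rewrite Rmult_assoc, Rinv_r, Rmult_1_r, Rmult_1_l by lra.
    now apply gauss_tail_bound. }
  assert (Hgap : (half_mass - gauss_prim x) * half_mass <= 2 * gauss x).
  { pose proof (gauss_prim_nonneg x ltac:(lra)). pose proof (gauss_prim_sqr x).
    pose proof (feynman_bounds x). pose proof (gauss_prim_lt_half_mass x).
    nra. }
  pose proof (gauss_pos x). nra.
Qed.

Lemma gauss_prim_lim_m_infty :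
  filterlim gauss_prim (Rbar_locally m_infty) (locally (- half_mass)).
Proof.
  apply filterlim_locally. intro eps.
  destruct (gauss_prim_near_half_mass eps (cond_pos eps)) as [M HM].
  exists (- M). intros x Hx.
  change (Rabs (gauss_prim x - - half_mass) < eps).
  rewrite <- (Ropp_involutive x), gauss_prim_odd.
  pose proof (HM (- x) ltac:(lra)). pose proof (gauss_prim_lt_half_mass (- x)).
  apply Rabs_def1; lra.
Qed.

(** Closed form of the normal distribution function in terms of [gauss_prim]:
    the improper integral is [gauss_prim x - lim_{-oo} gauss_prim]. *)
Lemma Phi_gauss_prim x : Phi x = / 2 + gauss_prim x / (2 * half_mass).
Proof.
  assert (Hsqrt : sqrt (2 * PI) = 2 * half_mass) by (unfold half_mass; field).
  assert (HD : forall y, Derive gauss_prim y = gauss y)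
    by (intro; apply is_derive_unique, gauss_prim_derive).
  assert (Hint : RInt_gen gauss (Rbar_locally m_infty) (at_point x)
                 = gauss_prim x + half_mass).
  { replace gauss with (Derive gauss_prim) by (apply functional_extensionality, HD).
    apply is_RInt_gen_unique.
    replace (gauss_prim x + half_mass) with (gauss_prim x - - half_mass) by ring.
    apply is_RInt_gen_Derive.
    - exists (fun _ => True) (fun _ => True); [exists 0; auto | unfold at_point; auto |].
      intros; eexists; apply gauss_prim_derive.
    - exists (fun _ => True) (fun _ => True); [exists 0; auto | unfold at_point; auto |].
      intros. rewrite (functional_extensionality _ _ HD). apply gauss_continuous.
    - apply gauss_prim_lim_m_infty.
    - intros P HP. exact (locally_singleton _ _ HP). }
  unfold Phi. fold gauss. rewrite Hint, Hsqrt.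
  pose proof half_mass_pos. field. lra.
Qed.

Lemma Phi_increasing a b : a < b -> Phi a < Phi b.
Proof.
  intro Hab. rewrite !Phi_gauss_prim.
  pose proof (gauss_prim_increasing a b Hab). pose proof half_mass_pos.
  apply Rplus_lt_compat_l, Rmult_lt_compat_r; [apply Rinv_0_lt_compat; lra | assumption].
Qed.

Lemma Phi_le a b : a <= b -> Phi a <= Phi b.
Proof. intros [Hlt | ->]; [left; now apply Phi_increasing | right; reflexivity]. Qed.

Lemma Phi_lt_reflect a b : Phi a < Phi b -> a < b.
Proof.
  intro H. destruct (Rlt_le_dec a b) as [Hab | Hba]; [exact Hab |].
  apply Phi_le in Hba. lra.
Qed.

Lemma Phi_injective a b : Phi a = Phi b -> a = b.
Proof.
  intro H. destruct (Rtotal_order a b) as [Hab | [Hab | Hab]]; [| exact Hab |];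
  apply Phi_increasing in Hab; lra.
Qed.

Lemma Phi_range x : 0 < Phi x < 1.
Proof.
  rewrite Phi_gauss_prim.
  pose proof (gauss_prim_lt_half_mass x). pose proof (gauss_prim_gt_neg_half_mass x).
  pose proof half_mass_pos.
  assert (- half_mass / (2 * half_mass) < gauss_prim x / (2 * half_mass)
          < half_mass / (2 * half_mass)).
  { split; apply Rmult_lt_compat_r; try (apply Rinv_0_lt_compat; lra); lra. }
  replace (half_mass / (2 * half_mass)) with (/ 2) in H2 by (field; lra).
  replace (- half_mass / (2 * half_mass)) with (- / 2) in H2 by (field; lra).
  lra.
Qed.

Lemma Phi_0 : Phi 0 = / 2.
Proof. rewrite Phi_gauss_prim, gauss_prim_0. unfold Rdiv. ring. Qed.

Lemma Phi_opp x : Phi (- x) = 1 - Phi x.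
Proof. rewrite !Phi_gauss_prim, gauss_prim_odd. pose proof half_mass_pos. field. lra. Qed.

Lemma Phi_continuous x : continuous Phi x.
Proof.
  apply (continuous_ext (fun y => plus (/ 2) (mult (gauss_prim y) (/ (2 * half_mass))))).
  { intro y. now rewrite Phi_gauss_prim. }
  apply (continuous_plus (K := R_AbsRing) (V := R_NormedModule)); [apply continuous_const |].
  apply (continuous_mult (K := R_AbsRing)); [apply gauss_prim_continuous | apply continuous_const].
Qed.

(** [Phi] exceeds every [c < 1] somewhere (since [gauss_prim -> half_mass]). *)
Lemma Phi_exceeds_level c : c < 1 -> exists x, c <= Phi x.
Proof.
  intro Hc. pose proof half_mass_pos.
  destruct (gauss_prim_near_half_mass (2 * half_mass * (1 - c))) as [M HM].
  { apply Rmult_lt_0_compat; lra. }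
  exists M. pose proof (HM M (Rle_refl M)). rewrite Phi_gauss_prim.
  assert (c - / 2 <= gauss_prim M / (2 * half_mass)); [| lra].
  apply Rmult_le_reg_r with (2 * half_mass); [lra |].
  unfold Rdiv. rewrite Rmult_assoc, Rinv_l, Rmult_1_r by lra. nra.
Qed.

Lemma Phi_surjective c : 0 < c < 1 -> exists x, Phi x = c.
Proof.
  intro Hc.
  destruct (Phi_exceeds_level c ltac:(lra)) as [b Hb].
  destruct (Phi_exceeds_level (1 - c) ltac:(lra)) as [a Ha].
  assert (Ha' : Phi (- a) <= c) by (rewrite Phi_opp; lra).
  assert (Hcont : continuity Phi)
    by (intro x; apply continuity_pt_filterlim, Phi_continuous).
  destruct (IVT_gen Phi (- a) b c Hcont) as [x [_ Hx]].
  { split; [apply Rle_trans with (Phi (- a)); [apply Rmin_l | exact Ha']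
           | apply Rle_trans with (Phi b); [exact Hb | apply Rmax_r]]. }
  now exists x.
Qed.

Lemma Phi_Phi_inv c : 0 < c < 1 -> Phi (Phi_inv c) = c.
Proof.
  intro Hc. apply (epsilon_spec (inhabits 0) (fun x => Phi x = c)).
  now apply Phi_surjective.
Qed.

Lemma Phi_inv_Phi x : Phi_inv (Phi x) = x.
Proof. apply Phi_injective, Phi_Phi_inv, Phi_range. Qed.

Lemma Phi_inv_compl c : 0 < c < 1 -> Phi_inv (1 - c) = - Phi_inv c.
Proof.
  intro Hc. rewrite <- (Phi_Phi_inv c Hc) at 1. now rewrite <- Phi_opp, Phi_inv_Phi.
Qed.

Lemma Phi_inv_neg c : 0 < c < / 2 -> Phi_inv c < 0.
Proof. intro Hc. apply Phi_lt_reflect. rewrite Phi_0, Phi_Phi_inv; lra. Qed.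

Section BlackScholes.

Variable k : R.
Hypothesis k_pos : 0 < k.

Lemma d1_inv_pos x : 0 < d1_inv k x.
Proof.
  unfold d1_inv. pose proof (sqrt_pos (x * x + 2 * k)).
  pose proof (sqrt_sqrt (x * x + 2 * k) ltac:(nra)). nra.
Qed.

(** [d1_inv] is a right inverse of [d1]: [s = x + sqrt (x^2+2k)] solves
    [s^2 - 2 x s - 2 k = 0]. *)
Lemma d1_d1_inv x : Defs.d1 k (d1_inv k x) = x.
Proof.
  pose proof (d1_inv_pos x) as Hpos. unfold Defs.d1, d1_inv in *.
  pose proof (sqrt_sqrt (x * x + 2 * k) ltac:(nra)).
  set (r := sqrt (x * x + 2 * k)) in *.
  replace k with ((r * r - x * x) / 2) by lra. field. lra.
Qed.

Lemma d1_increasing a b : 0 < a -> a < b -> Defs.d1 k a < Defs.d1 k b.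
Proof.
  intros Ha Hab. unfold Defs.d1.
  assert (k / b < k / a); [| lra].
  apply Rmult_lt_compat_l; [exact k_pos |]. apply Rinv_lt_contravar; nra.
Qed.

Lemma d1_le a b : 0 < a -> a <= b -> Defs.d1 k a <= Defs.d1 k b.
Proof. intros Ha [Hab | ->]; [left; now apply d1_increasing | right; reflexivity]. Qed.

Lemma d2_le_half s : 0 < s -> Defs.d2 k s <= - s / 2.
Proof.
  intro Hs. unfold Defs.d2. assert (0 < k / s) by (now apply Rdiv_lt_0_compat). lra.
Qed.

Lemma C_BS_lt_Phi_d1 s : C_BS k s < Phi (Defs.d1 k s).
Proof.
  unfold C_BS. pose proof (Phi_range (Defs.d2 k s)). pose proof (exp_pos k). nra.
Qed.

Lemma C_BS_continuous s : 0 < s -> continuity_pt (C_BS k) s.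
Proof.
  intro Hs. apply continuity_pt_filterlim.
  assert (Hd : forall d : R -> R, (forall y, 0 < y -> ex_derive d y) -> continuous (fun y => Phi (d y)) s).
  { intros d Hder. apply (continuous_comp d Phi); [| apply Phi_continuous].
    apply (ex_derive_continuous (K := R_AbsRing) (V := R_NormedModule)), Hder, Hs. }
  apply (continuous_ext (fun y => minus (Phi (Defs.d1 k y)) (mult (exp k) (Phi (Defs.d2 k y))))).
  { intro y. reflexivity. }
  apply (continuous_minus (K := R_AbsRing) (V := R_NormedModule)).
  - apply Hd. intros y Hy. unfold Defs.d1. auto_derive. lra.
  - apply (continuous_mult (K := R_AbsRing)); [apply continuous_const |].
    apply Hd. intros y Hy. unfold Defs.d2. auto_derive. lra.
Qed.

(** For small volatility the price is below any level [c]: take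
    [s = d1_inv (Phi_inv (c/2))], so that [C_BS s < Phi (d1 s) = c/2]. *)
Lemma C_BS_small_vol c : 0 < c < 1 -> exists s, 0 < s /\ C_BS k s < c.
Proof.
  intro Hc. exists (d1_inv k (Phi_inv (c / 2))). split; [apply d1_inv_pos |].
  pose proof (C_BS_lt_Phi_d1 (d1_inv k (Phi_inv (c / 2)))).
  rewrite d1_d1_inv, Phi_Phi_inv in H by lra. lra.
Qed.

(** For large volatility the price exceeds any level [c < 1]: choose [s] so
    large that [Phi (d1 s) >= (1+c)/2] and [e^k Phi (d2 s) < (1-c)/2]. *)
Lemma C_BS_large_vol c s0 : 0 < c < 1 -> exists s, s0 <= s /\ c < C_BS k s.
Proof.
  intro Hc. pose proof (exp_pos k) as Hek.
  set (q := (1 - c) / (2 * (1 + exp k))).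
  assert (Hq : 0 < q < 1).
  { unfold q. split; [apply Rdiv_lt_0_compat; lra |].
    apply Rmult_lt_reg_r with (2 * (1 + exp k)); [lra |].
    unfold Rdiv. rewrite Rmult_assoc, Rinv_l by lra. lra. }
  set (s := Rmax (Rmax (d1_inv k (Phi_inv ((1 + c) / 2))) (- 2 * Phi_inv q)) (Rmax s0 1)).
  assert (Hs1 : d1_inv k (Phi_inv ((1 + c) / 2)) <= s)
    by (unfold s; eapply Rle_trans; [apply Rmax_l | apply Rmax_l]).
  assert (Hs2 : - 2 * Phi_inv q <= s)
    by (unfold s; eapply Rle_trans; [apply Rmax_r | apply Rmax_l]).
  assert (Hs3 : s0 <= s) by (unfold s; eapply Rle_trans; [apply Rmax_l | apply Rmax_r]).
  assert (Hs4 : 1 <= s) by (unfold s; eapply Rle_trans; [apply Rmax_r | apply Rmax_r]).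
  exists s. split; [exact Hs3 |]. unfold C_BS.
  assert (Hfirst : (1 + c) / 2 <= Phi (Defs.d1 k s)).
  { rewrite <- (Phi_Phi_inv ((1 + c) / 2)) by lra. apply Phi_le.
    rewrite <- (d1_d1_inv (Phi_inv ((1 + c) / 2))) at 1.
    apply d1_le; [apply d1_inv_pos | exact Hs1]. }
  assert (Hsecond : Phi (Defs.d2 k s) <= q).
  { rewrite <- (Phi_Phi_inv q Hq). apply Phi_le.
    pose proof (d2_le_half s ltac:(lra)). lra. }
  assert (Hq_small : exp k * q < (1 - c) / 2).
  { unfold q. apply Rmult_lt_reg_r with (2 * (1 + exp k)); [lra |].
    unfold Rdiv. rewrite Rmult_assoc, (Rmult_assoc (1 - c)), Rinv_l by lra. nra. }
  nra.
Qed.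

Lemma implied_vol_spec c : 0 < c < 1 -> 0 < implied_vol k c /\ C_BS k (implied_vol k c) = c.
Proof.
  intro Hc. apply (epsilon_spec (inhabits 0) (fun s => 0 < s /\ C_BS k s = c)).
  destruct (C_BS_small_vol c Hc) as [s1 [Hs1 Hlow]].
  destruct (C_BS_large_vol c (s1 + 1) Hc) as [s2 [Hs2 Hhigh]].
  destruct (Ranalysis5.IVT_interv (fun s => C_BS k s - c) s1 s2) as [s [Hs Hroot]].
  - intros a Ha. apply continuity_pt_minus; [apply C_BS_continuous; lra | apply continuity_pt_const].
    intros u v; reflexivity.
  - lra.
  - lra.
  - lra.
  - exists s. split; lra.
Qed.

(** Upper bound [L2 c < sigma c]: from [c = C_BS sigma < Phi (d1 sigma)] we get
    [Phi_inv c < d1 sigma], i.e. [L2 c = d1_inv (Phi_inv c) < sigma]. *)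
Lemma L2_lt_implied_vol c : 0 < c < 1 -> L2 k c < implied_vol k c.
Proof.
  intro Hc. destruct (implied_vol_spec c Hc) as [Hpos Hprice].
  set (s := implied_vol k c) in *.
  assert (Hlt : Phi_inv c < Defs.d1 k s).
  { apply Phi_lt_reflect. rewrite Phi_Phi_inv by exact Hc.
    rewrite <- Hprice at 1. apply C_BS_lt_Phi_d1. }
  unfold L2. destruct (Rlt_le_dec (d1_inv k (Phi_inv c)) s) as [H | H]; [exact H |].
  pose proof (d1_le s _ Hpos H) as Hd. rewrite d1_d1_inv in Hd. lra.
Qed.

(** Reflection identity [L2 c * L2 (1 - c) = 2 k], from [Phi_inv (1-c) = - Phi_inv c]
    and [(x + sqrt (x^2+2k)) (-x + sqrt (x^2+2k)) = 2k]. *)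
Lemma L2_reflection c : 0 < c < 1 -> L2 k c * L2 k (1 - c) = 2 * k.
Proof.
  intro Hc. unfold L2, d1_inv. rewrite Phi_inv_compl by exact Hc.
  set (x := Phi_inv c). replace (- x * - x) with (x * x) by ring.
  pose proof (sqrt_sqrt (x * x + 2 * k) ltac:(nra)). nra.
Qed.

Lemma L2_bounds_from_upper_bound (U : R -> R) :
  (forall c, 0 < c < 1 -> 0 < U c) ->
  (forall c, 0 < c < 1 -> implied_vol k c <= U c) ->
  forall c, 0 < c < 1 -> 2 * k / U (1 - c) <= L2 k c /\ L2 k c <= implied_vol k c.
Proof.
  intros U_pos U_upper c Hc.
  assert (Hc' : 0 < 1 - c < 1) by lra.
  split; [| left; now apply L2_lt_implied_vol].
  pose proof (U_pos _ Hc'). pose proof (U_upper _ Hc').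
  pose proof (L2_lt_implied_vol _ Hc'). pose proof (L2_reflection c Hc).
  assert (0 < L2 k c) by apply d1_inv_pos.
  apply Rmult_le_reg_r with (U (1 - c)); [assumption |].
  unfold Rdiv. rewrite Rmult_assoc, Rinv_l by lra. nra.
Qed.

(** The levels [c / (1 + e^k)] used by [U1] lie in [(0, 1/2)], so their
    quantiles are negative. *)
Lemma U1_quantile_neg c : 0 < c < 1 -> Phi_inv (c / (1 + exp k)) < 0.
Proof.
  intro Hc. apply Phi_inv_neg.
  assert (Hek : 1 < exp k) by (rewrite <- exp_0; now apply exp_increasing).
  split; [apply Rdiv_lt_0_compat; lra |].
  apply Rmult_lt_reg_r with (1 + exp k); [lra |].
  unfold Rdiv. rewrite Rmult_assoc, Rinv_l by lra. lra.
Qed.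

Lemma U1_pos c : 0 < c < 1 -> 0 < U1 k c.
Proof. intro Hc. pose proof (U1_quantile_neg (1 - c) ltac:(lra)). unfold U1. lra. Qed.

Lemma L2_lower_bound_U1 :
  (forall c, 0 < c < 1 -> implied_vol k c <= U1 k c) ->
  forall c, 0 < c < 1 -> - k / Phi_inv (c / (1 + exp k)) <= L2 k c.
Proof.
  intros U1_upper c Hc.
  destruct (L2_bounds_from_upper_bound (U1 k) U1_pos U1_upper c Hc) as [Hlow _].
  replace (- k / Phi_inv (c / (1 + exp k))) with (2 * k / U1 k (1 - c)); [exact Hlow |].
  unfold U1. replace (1 - (1 - c)) with c by ring.
  pose proof (U1_quantile_neg c Hc). field. lra.
Qed.

End BlackScholes.

Theorem mainTheorem10 (k : R) (hk : 0 < k) :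
  (forall U : R -> R,
     (forall c, 0 < c < 1 -> 0 < U c) ->
     (forall c, 0 < c < 1 -> implied_vol k c <= U c) ->
     forall c, 0 < c < 1 ->
       2 * k / U (1 - c) <= L2 k c /\ L2 k c <= implied_vol k c)
  /\
  ((forall c, 0 < c < 1 -> implied_vol k c <= U1 k c) ->
     forall c, 0 < c < 1 ->
       - k / Phi_inv (c / (1 + exp k)) <= L2 k c).
Proof.
  split.
  - exact (L2_bounds_from_upper_bound k hk).
  - exact (L2_lower_bound_U1 k hk).
Qed.
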